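(* Let $R$ be a ring, $\phi:M\to M'$ an epimorphism of left $R$-modules and $N$ a submodule of $M$ with $N\supseteq\ker\phi$. Then: (i) if $\beta^s_{co}(N)=\langle E_M(N)\rangle$, then $\beta^s_{co}(\phi(N))=\langle E_{M'}(\phi(N))\rangle$; (ii) if $N'$ is a submodule of $M'$ with $\beta^s_{co}(N')=\langle E_{M'}(N')\rangle$, then $\beta^s_{co}(\phi^{-1}(N'))=\langle E_M(\phi^{-1}(N'))\rangle$; (iii) if $\beta^s(N)=\langle E_M(N)\rangle$, then $\beta^s(\phi(N))=\langle E_{M'}(\phi(N))\rangle$; (iv) if $N'$ is a submodule of $M'$ with $\beta^s(N')=\langle E_{M'}(N')\rangle$, then $\beta^s(\phi^{-1}(N'))=\langle E_M(\phi^{-1}(N'))\rangle$.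
   Context: Rings are associative with identity; modules are unital left modules. For a module $X$ and submodule $K$: a submodule $P$ of $X$ is prime if $RX\not\subseteq P$ and for every ideal $A$ of $R$ and submodule $L$ with $AL\subseteq P$, $L\subseteq P$ or $AX\subseteq P$; completely prime if $RX\not\subseteq P$ and $rx\in P$ implies $x\in P$ or $rX\subseteq P$. $\beta^s(K)$ (resp. $\beta^s_{co}(K)$) is the intersection of all prime (resp. completely prime) submodules of $X$ containing $K$ ($=X$ if none), computed in the ambient module of $K$. $E_X(K)=\{rx: r\in R,x\in X, r^kx\in K\text{ for some }k\in\mathbb N\}$ and $\langle E_X(K)\rangle$ is the submodule it generates. *)

From HB Require Import structures.
From mathcomp Require Import all_boot all_order all_algebra.
Set Implicit Arguments. Unset Strict Implicit. Unset Printing Implicit Defensive.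
Import GRing.Theory.
Local Open Scope ring_scope.

Section Defs.
Variable R : pzRingType.

Definition subs (T : Type) (A B : T -> Prop) := forall x, A x -> B x.

Definition is_ideal (A : R -> Prop) :=
  [/\ A 0, (forall a b, A a -> A b -> A (a + b)),
      (forall r a, A a -> A (r * a)) & (forall r a, A a -> A (a * r))].

Variable M : lmodType R.

Definition is_submod (P : M -> Prop) :=
  [/\ P 0, (forall x y, P x -> P y -> P (x + y)) &
      (forall (r : R) x, P x -> P (r *: x))].

Definition gen_sub (S : M -> Prop) : M -> Prop :=
  fun x => forall P, is_submod P -> subs S P -> P x.

Definition prodsub (A : R -> Prop) (L : M -> Prop) : M -> Prop :=
  gen_sub (fun y => exists a l, [/\ A a, L l & y = a *: l]).

Definition whole : M -> Prop := fun _ => True.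

Definition prime_sub (P : M -> Prop) :=
  [/\ is_submod P, ~ subs (prodsub (fun _ => True) whole) P &
      forall A L, is_ideal A -> is_submod L -> subs (prodsub A L) P ->
        subs L P \/ subs (prodsub A whole) P].

Definition cprime_sub (P : M -> Prop) :=
  [/\ is_submod P, ~ subs (prodsub (fun _ => True) whole) P &
      forall (r : R) x, P (r *: x) -> P x \/ (forall y, P (r *: y))].

(* beta^s(K), beta^s_co(K): intersections (= M if the family is empty) *)
Definition beta_s (K : M -> Prop) : M -> Prop :=
  fun x => forall P, prime_sub P -> subs K P -> P x.
Definition beta_sco (K : M -> Prop) : M -> Prop :=
  fun x => forall P, cprime_sub P -> subs K P -> P x.

Definition EM (K : M -> Prop) : M -> Prop :=
  fun y => exists (r : R) x, y = r *: x /\ exists k : nat, K ((r ^+ k.+1) *: x).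

End Defs.

Definition img (R : pzRingType) (M M' : lmodType R) (f : M -> M') (N : M -> Prop)
  : M' -> Prop := fun y => exists x, N x /\ y = f x.
Definition preimg (R : pzRingType) (M M' : lmodType R) (f : M -> M') (N : M' -> Prop)
  : M -> Prop := fun x => N (f x).

From HB Require Import structures.
From mathcomp Require Import all_boot all_order all_algebra.
From Stdlib Require Import FunctionalExtensionality PropExtensionality.
Set Implicit Arguments. Unset Strict Implicit. Unset Printing Implicit Defensive.
Import GRing.Theory.
Local Open Scope ring_scope.

(* On submodules containing ker phi, image and preimage along phi are mutually
   inverse and preserve (complete) primeness, and phi maps E_M(phi^-1 N') onto
   E_M'(N').  As beta^s, beta^s_co and <E(-)> are intersections of classes of
   submodules containing a given set, each commutes with preimage:
   beta(phi^-1 N') = phi^-1(beta N') and <E_M(phi^-1 N')> = phi^-1<E_M'(N')>.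
   This is (ii) and (iv); (i) and (iii) follow with N' = phi(N), because
   phi^-1(phi N) = N and preimage along a surjection is injective. *)

Lemma predext (T : Type) (P Q : T -> Prop) : (forall x, P x <-> Q x) -> P = Q.
Proof.
by move=> PQ; apply: functional_extensionality => x; apply: propositional_extensionality.
Qed.

(* [beta_s], [beta_sco] and [gen_sub] are convertible to [hull prime_sub],
   [hull cprime_sub] and [hull is_submod]. *)
Definition hull (R : pzRingType) (M : lmodType R) (C : (M -> Prop) -> Prop)
  (S : M -> Prop) : M -> Prop :=
  fun x => forall P, C P -> subs S P -> P x.

Section Submodules.
Variables (R : pzRingType) (M : lmodType R).

Lemma gen_sub_submod (S : M -> Prop) : is_submod (gen_sub S).
Proof.
split.
- by move=> P [].
- move=> x y Sx Sy P subP SP; case: (subP) => _ PD _.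
  by apply: PD; [apply: Sx | apply: Sy].
- by move=> r x Sx P subP SP; case: (subP) => _ _ PZ; apply: PZ; apply: Sx.
Qed.

Lemma gen_sub_incl (S : M -> Prop) : subs S (gen_sub S).
Proof. by move=> x Sx P _; apply. Qed.

Lemma gen_sub_min (S P : M -> Prop) : is_submod P -> subs S P -> subs (gen_sub S) P.
Proof. by move=> subP SP x; apply. Qed.

Lemma prodsub_whole (P : M -> Prop) :
  subs (prodsub (fun _ => True) (@whole R M)) P <-> forall x, P x.
Proof.
split=> [RMP x | PT x _]; last exact: PT.
by apply: RMP; apply: gen_sub_incl; exists 1, x; rewrite scale1r.
Qed.

Lemma EM_incl (K : M -> Prop) : subs K (EM K).
Proof. by move=> x Kx; exists 1, x; rewrite scale1r; split=> //; exists 0%N; rewrite expr1 scale1r. Qed.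

End Submodules.

Section Correspondence.
Variables (R : pzRingType) (M M' : lmodType R) (phi : {linear M -> M'}).

Lemma preimg_submod (P : M' -> Prop) : is_submod P -> is_submod (preimg phi P).
Proof.
case=> P0 PD PZ; split; rewrite /preimg.
- by rewrite linear0.
- by move=> x y Px Py; rewrite linearD; apply: PD.
- by move=> r x Px; rewrite linearZ; apply: PZ.
Qed.

Lemma img_submod (P : M -> Prop) : is_submod P -> is_submod (img phi P).
Proof.
case=> P0 PD PZ; split.
- by exists 0; rewrite linear0.
- by move=> _ _ [x [Px ->]] [y [Py ->]]; exists (x + y); rewrite linearD; split=> //; apply: PD.
- by move=> r _ [x [Px ->]]; exists (r *: x); rewrite linearZ; split=> //; apply: PZ.
Qed.

Lemma prodsub_map (A : R -> Prop) (L : M -> Prop) (L' : M' -> Prop) :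
  (forall l, L l -> L' (phi l)) -> forall z, prodsub A L z -> prodsub A L' (phi z).
Proof.
move=> LL'; apply: gen_sub_min; first exact/preimg_submod/gen_sub_submod.
move=> _ [a [l [Aa Ll ->]]]; rewrite /preimg linearZ; apply: gen_sub_incl.
by exists a, (phi l); split=> //; apply: LL'.
Qed.

Lemma preimg_img (P : M -> Prop) : is_submod P -> (forall x, phi x = 0 -> P x) ->
  preimg phi (img phi P) = P.
Proof.
move=> [_ PD _] kerP; apply: predext => x; split=> [[x0 [Px0 ephi]] | Px]; last by exists x.
have -> : x = x0 + (x - x0) by rewrite addrC subrK.
by apply: PD => //; apply: kerP; rewrite linearB ephi subrr.
Qed.

Lemma hull_preimg_img (C : (M -> Prop) -> Prop) (C' : (M' -> Prop) -> Prop)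
    (S : M -> Prop) :
  (forall P, C P -> is_submod P) ->
  (forall P', C' P' -> C (preimg phi P')) ->
  (forall P, C P -> (forall x, phi x = 0 -> P x) -> C' (img phi P)) ->
  (forall x, phi x = 0 -> S x) ->
  hull C S = preimg phi (hull C' (img phi S)).
Proof.
move=> C_submod C'_preimg C_img kerS; apply: predext => x; split.
- move=> hullx P' C'P' SP'; apply: (hullx (preimg phi P')); first exact: C'_preimg.
  by move=> y Sy; apply: SP'; exists y.
- move=> hullx P CP SP.
  have kerP x0 : phi x0 = 0 -> P x0 by move=> /kerS; apply: SP.
  rewrite -(preimg_img (C_submod P CP) kerP); apply: hullx; first exact: C_img.
  by move=> _ [y [Sy ->]]; exists y; split=> //; apply: SP.
Qed.

Hypothesis phi_surj : forall y : M', exists x : M, phi x = y.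

Lemma img_preimg (P : M' -> Prop) : img phi (preimg phi P) = P.
Proof.
apply: predext => y; split=> [[x [Px ->]] // | Py].
by have [x ex] := phi_surj y; exists x; rewrite /preimg ex.
Qed.

Lemma img_EM_preimg (N' : M' -> Prop) : img phi (EM (preimg phi N')) = EM N'.
Proof.
apply: predext => y; split.
- move=> [_ [[r [x [-> [k N'rx]]]] ->]]; exists r, (phi x); rewrite linearZ.
  by split=> //; exists k; rewrite -linearZ.
- move=> [r [y' [-> [k N'ry']]]]; have [x ex] := phi_surj y'; subst y'.
  exists (r *: x); rewrite linearZ; split=> //; exists r, x; split=> //.
  by exists k; rewrite /preimg linearZ.
Qed.

Lemma preimg_inj (P Q : M' -> Prop) : preimg phi P = preimg phi Q -> P = Q.
Proof.
move=> ePQ; apply: functional_extensionality => y; have [x <-] := phi_surj y.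
exact: (congr1 (fun S => S x) ePQ).
Qed.

Lemma proper_preimg (P' : M' -> Prop) :
  ~ subs (prodsub (fun _ => True) (@whole R M')) P' ->
  ~ subs (prodsub (fun _ => True) (@whole R M)) (preimg phi P').
Proof.
rewrite !prodsub_whole => P'proper P'T; apply: P'proper => y.
by have [x <-] := phi_surj y; apply: P'T.
Qed.

Lemma proper_img (P : M -> Prop) : is_submod P -> (forall x, phi x = 0 -> P x) ->
  ~ subs (prodsub (fun _ => True) (@whole R M)) P ->
  ~ subs (prodsub (fun _ => True) (@whole R M')) (img phi P).
Proof.
move=> subP kerP; rewrite !prodsub_whole => Pproper imgT.
by apply: Pproper => x; rewrite -(preimg_img subP kerP); apply: imgT.
Qed.

Lemma cprime_sub_preimg (P' : M' -> Prop) :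
  cprime_sub P' -> cprime_sub (preimg phi P').
Proof.
case=> subP' P'proper P'cprime; split; [exact: preimg_submod | exact: proper_preimg |].
move=> r x; rewrite /preimg linearZ => /P'cprime [P'x | P'r]; [by left | right].
by move=> y; rewrite /preimg linearZ; apply: P'r.
Qed.

Lemma cprime_sub_img (P : M -> Prop) : (forall x, phi x = 0 -> P x) ->
  cprime_sub P -> cprime_sub (img phi P).
Proof.
move=> kerP [subP Pproper Pcprime].
have Pback x : img phi P (phi x) -> P x by rewrite -{2}(preimg_img subP kerP).
split; [exact: img_submod | exact: proper_img |].
move=> r y; have [x <-] := phi_surj y; rewrite -linearZ.
move=> /Pback /Pcprime [Px | Pr]; first by left; exists x.
by right=> y'; have [z <-] := phi_surj y'; rewrite -linearZ; exists (r *: z).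
Qed.

Lemma prime_sub_preimg (P' : M' -> Prop) :
  prime_sub P' -> prime_sub (preimg phi P').
Proof.
case=> subP' P'proper P'prime; split; [exact: preimg_submod | exact: proper_preimg |].
move=> A L idA subL ALP.
have AimgLP' : subs (prodsub A (img phi L)) P'.
  apply: gen_sub_min => // _ [a [_ [Aa [l [Ll ->]] ->]]].
  by rewrite -linearZ; apply: ALP; apply: gen_sub_incl; exists a, l.
case: (P'prime A _ idA (img_submod subL) AimgLP') => [LP' | AP']; [left | right].
- by move=> l Ll; apply: LP'; exists l.
- by move=> z Az; apply: AP'; apply: (prodsub_map (L' := @whole R M') _ Az).
Qed.

Lemma prime_sub_img (P : M -> Prop) : (forall x, phi x = 0 -> P x) ->
  prime_sub P -> prime_sub (img phi P).
Proof.
move=> kerP [subP Pproper Pprime]; have Pback := preimg_img subP kerP.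
split; [exact: img_submod | exact: proper_img |].
move=> A L' idA subL' AL'P.
have ApreimgLP : subs (prodsub A (preimg phi L')) P.
  by rewrite -Pback => z Az; apply: AL'P; apply: (prodsub_map (fun _ L'l => L'l) Az).
case: (Pprime A _ idA (preimg_submod subL') ApreimgLP) => [LP | AP]; [left | right].
- by rewrite -(img_preimg L') => _ [x [L'x ->]]; exists x; split=> //; apply: LP.
- have AM'_img : subs (prodsub A (@whole R M')) (img phi (prodsub A (@whole R M))).
    apply: gen_sub_min; first exact/img_submod/gen_sub_submod.
    move=> _ [a [y [Aa _ ->]]]; have [x <-] := phi_surj y.
    by exists (a *: x); rewrite linearZ; split=> //; apply: gen_sub_incl; exists a, x.
  by move=> y /AM'_img [z [Az ->]]; exists z; split=> //; apply: AP.
Qed.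

Section Preimage.
Variable N' : M' -> Prop.
Hypothesis N'0 : N' 0.

Let ker_preimg x : phi x = 0 -> preimg phi N' x.
Proof. by rewrite /preimg => ->. Qed.

Lemma beta_sco_preimg : beta_sco (preimg phi N') = preimg phi (beta_sco N').
Proof.
rewrite -{2}(img_preimg N'); apply: hull_preimg_img ker_preimg.
- by move=> P [].
- exact: cprime_sub_preimg.
- by move=> P CP kerP; apply: cprime_sub_img.
Qed.

Lemma beta_s_preimg : beta_s (preimg phi N') = preimg phi (beta_s N').
Proof.
rewrite -{2}(img_preimg N'); apply: hull_preimg_img ker_preimg.
- by move=> P [].
- exact: prime_sub_preimg.
- by move=> P CP kerP; apply: prime_sub_img.
Qed.

Lemma gen_EM_preimg : gen_sub (EM (preimg phi N')) = preimg phi (gen_sub (EM N')).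
Proof.
rewrite -img_EM_preimg; apply: hull_preimg_img => //.
- exact: preimg_submod.
- by move=> P subP _; apply: img_submod.
- by move=> x /ker_preimg; apply: EM_incl.
Qed.

End Preimage.
End Correspondence.

Theorem lemma4p14 (R : pzRingType) (M M' : lmodType R) (phi : {linear M -> M'})
  (phi_surj : forall y : M', exists x : M, phi x = y)
  (N : M -> Prop) (hN : is_submod N)
  (hker : forall x : M, phi x = 0 -> N x) :
  [/\ beta_sco N = gen_sub (EM N) ->
        beta_sco (img phi N) = gen_sub (EM (img phi N)),
      (forall N' : M' -> Prop, is_submod N' ->
        beta_sco N' = gen_sub (EM N') ->
        beta_sco (preimg phi N') = gen_sub (EM (preimg phi N'))),
      beta_s N = gen_sub (EM N) ->
        beta_s (img phi N) = gen_sub (EM (img phi N)) &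
      (forall N' : M' -> Prop, is_submod N' ->
        beta_s N' = gen_sub (EM N') ->
        beta_s (preimg phi N') = gen_sub (EM (preimg phi N')))].
Proof.
have [imgN0 _ _] := img_submod phi hN.
have preimg_imgN := preimg_img (phi := phi) hN hker.
split.
- move=> betaN; apply: (preimg_inj phi_surj).
  by rewrite -beta_sco_preimg // -gen_EM_preimg // preimg_imgN.
- by move=> N' [N'0 _ _] betaN'; rewrite beta_sco_preimg // gen_EM_preimg // betaN'.
- move=> betaN; apply: (preimg_inj phi_surj).
  by rewrite -beta_s_preimg // -gen_EM_preimg // preimg_imgN.
- by move=> N' [N'0 _ _] betaN'; rewrite beta_s_preimg // gen_EM_preimg // betaN'.
Qed.
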